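(* Let $n\ge2$, $k\ge1$, and let $\partial_k$ denote the distance in $H_{n,k}$. For every vertex $\mathbf x=x_1\ldots x_k$ of $H_{n,k}$: $$\partial_k(\mathbf x,\mathbf r)\le\begin{cases}k-1&\text{if }x_1=0,\\ k&\text{otherwise,}\end{cases}\qquad \partial_k(\mathbf x,P)\le\begin{cases}k&\text{if }x_1=0,\\ k-1&\text{otherwise.}\end{cases}$$
   Context: Let $n\ge 2$ and $k\ge 1$ be integers. $H_{n,k}$ is the simple undirected graph with vertex set $V_{n,k}=\mathbb{Z}_n^k$ (so $|V_{n,k}|=n^k$), whose vertices are written as strings $x_1x_2\ldots x_k$ with $x_j\in\mathbb{Z}_n=\{0,1,\ldots,n-1\}$. Two distinct vertices are adjacent if and only if they are related by one of the following rules. For $i=0$ the prefix $x_1\ldots x_i$ is empty, and ''$0\ldots0$'' denotes a string of zeros completing the word to length $k$. (R1) $x_1\ldots x_{k-1}x_k\sim x_1\ldots x_{k-1}y_k$ whenever $y_k\neq x_k$. (R2) For $0\le i\le k-2$: $x_1\ldots x_i0\ldots0\sim x_1\ldots x_ix_{i+1}\ldots x_k$ whenever $x_j\neq 0$ for all $i+1\le j\le k$. (R3) For $1\le i\le k-1$: $x_1\ldots x_{i-1}x_i0\ldots0\sim x_1\ldots x_{i-1}y_i0\ldots0$ whenever $x_i,y_i\neq0$ and $x_i\ne y_i$. In particular, $H_{n,1}$ is the complete graph $K_n$. The root of $H_{n,k}$ is $\mathbf r=00\ldots0$; a vertex of $H_{n,k}$ is peripheral if all its coordinates are nonzero, and $P$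 denotes the set of peripheral vertices. For a vertex $\mathbf x$ and a vertex set $U$, $\partial(\mathbf x,U)=\min_{\mathbf u\in U}\partial(\mathbf x,\mathbf u)$. *)

From mathcomp Require Import all_boot.
Set Implicit Arguments. Unset Strict Implicit. Unset Printing Implicit Defensive.

(* Vertices of H_{n,k}: words x_1...x_k over Z_n, encoded as finite functions
   'I_k -> 'I_n; coordinate x_{j+1} is (x j) for j : 'I_k (0-indexed positions). *)
Definition vert (n k : nat) := {ffun 'I_k -> 'I_n}.

Definition R1 n k (x y : vert n k) : bool :=
  (x != y) && [forall j : 'I_k, (j.+1 < k) ==> (x j == y j)].

(* (R2), oriented: u = x_1..x_i 0..0 and v = x_1..x_i x_{i+1}..x_k with all
   x_{i+1},..,x_k nonzero, for some prefix length i with 0 <= i <= k-2. *)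
Definition R2 n k (u v : vert n k) : bool :=
  [exists i : 'I_k.+1, (i.+2 <= k) &&
    [forall j : 'I_k, if j < i then u j == v j
                      else (val (u j) == 0) && (val (v j) != 0)]].

(* (R3): x_1..x_{i-1} x_i 0..0 ~ x_1..x_{i-1} y_i 0..0 with x_i, y_i nonzero,
   distinct, 1 <= i <= k-1.  Here p = i-1 is the 0-indexed position, p <= k-2. *)
Definition R3 n k (x y : vert n k) : bool :=
  [exists p : 'I_k, (p.+2 <= k) &&
    [&& val (x p) != 0, val (y p) != 0, x p != y p &
    [forall j : 'I_k, if j < p then x j == y j
                      else (p < j) ==> ((val (x j) == 0) && (val (y j) == 0))]]].

Definition Hadj n k : rel (vert n k) :=
  fun x y => [|| R1 x y, R2 x y, R2 y x | R3 x y].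

Fixpoint within (T : finType) (e : rel T) (m : nat) (x y : T) : bool :=
  if m is m'.+1 then (x == y) || [exists z, e x z && within e m' z y]
  else x == y.

(* dist e x y = least m such that y is reachable from x in at most m steps;
   if y is unreachable it returns #|T| (larger than any finite distance). *)
Definition dist (T : finType) (e : rel T) (x y : T) : nat :=
  find (fun m => within e m x y) (iota 0 #|T|).

Definition dist_set (T : finType) (e : rel T) (x : T) (U : {set T}) : nat :=
  \big[minn/#|T|]_(u in U) dist e x u.

Definition rootset n k : {set vert n k} :=
  [set x : vert n k | [forall j : 'I_k, val (x j) == 0]].

Definition periph n k : {set vert n k} :=
  [set x : vert n k | [forall j : 'I_k, val (x j) != 0]].

Definition first_zero n k (x : vert n k) : bool :=
  [forall j : 'I_k, (val j == 0) ==> (val (x j) == 0)].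

(* For 0 <= s < k, let a and b be the least numbers of steps from x to
   x_1..x_s 0..0 and to some x_1..x_s y_(s+1)..y_k with every y_j nonzero.
   For s = k-1, R1 gives (a, b) <= (0, 1) or (1, 0) according as x_k = 0 or
   not.  Passing from s+1 to s, the two targets for s are joined by an R2 edge
   and one of them is also a target for s+1 (the zero one if x_(s+1) = 0, the
   peripheral one otherwise), so (a, b) <= (k-1-s, k-s) if x_(s+1) = 0 and
   (a, b) <= (k-s, k-1-s) otherwise.  At s = 0 the targets are the root and a
   peripheral vertex. *)
From mathcomp Require Import all_boot all_order zify.
Import Order.TTheory.

Set Implicit Arguments.
Unset Strict Implicit.
Unset Printing Implicit Defensive.

Lemma within_mono (T : finType) (e : rel T) a b x y :
  a <= b -> within e a x y -> within e b x y.
Proof.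
elim: b a x => [|b IH] [|a] x //= => [_ ->//|hab /orP [->//|/existsP [z]]].
move=> /andP [exz hz]; apply/orP; right; apply/existsP; exists z.
by rewrite exz (IH a).
Qed.

Lemma within_trans (T : finType) (e : rel T) a b x y z :
  within e a x y -> within e b y z -> within e (a + b) x z.
Proof.
elim: a x => [|a IH] x /=; first by move=> /eqP ->.
case/orP => [/eqP -> hyz|/existsP [w /andP [exw hw]] hyz].
  by apply: (@within_mono _ _ b (a + b).+1) hyz; rewrite ltnW // ltnS leq_addl.
by apply/orP; right; apply/existsP; exists w; rewrite exw (IH w).
Qed.

Lemma within_edge (T : finType) (e : rel T) x y : e x y -> within e 1 x y.
Proof. by move=> exy; apply/orP; right; apply/existsP; exists y; rewrite exy eqxx. Qed.

Lemma dist_leq (T : finType) (e : rel T) m x y :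
  m < #|T| -> within e m x y -> dist e x y <= m.
Proof.
move=> hm hw; rewrite leqNgt; apply/negP => /(before_find 0).
by rewrite nth_iota // add0n hw.
Qed.

Lemma dist_set_leq (T : finType) (e : rel T) x (U : {set T}) u m :
  u \in U -> m < #|T| -> within e m x u -> dist_set e x U <= m.
Proof.
move=> hu hm /(dist_leq hm); apply: leq_trans.
by rewrite /dist_set -minEnat; apply: (@bigmin_le_cond _ nat _ #|T| u (mem U)).
Qed.

Section SuffixTargets.

Variables n k : nat.
Hypothesis n_gt1 : 1 < n.

Let zero : 'I_n := Ordinal (ltnW n_gt1).
Let one : 'I_n := Ordinal n_gt1.

Implicit Types x y : vert n k.

Definition fill_from (x : vert n k) (s : nat) (c : 'I_n) : vert n k :=
  [ffun j : 'I_k => if j < s then x j else c].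

Definition periph_from (x : vert n k) (s : nat) (y : vert n k) : bool :=
  [forall j : 'I_k, if j < s then y j == x j else val (y j) != 0].

Lemma fill_from_k x c : fill_from x k c = x.
Proof. by apply/ffunP => j; rewrite ffunE ltn_ord. Qed.

Lemma fill_zero_succ x (s : 'I_k) :
  val (x s) = 0 -> fill_from x s.+1 zero = fill_from x s zero.
Proof.
move=> xs0; apply/ffunP => j; rewrite !ffunE ltnS leq_eqVlt.
by case: eqP => [/val_inj -> | _]; rewrite ?ltnn //; apply: val_inj.
Qed.

Lemma periph_from_k x : periph_from x k x.
Proof. by apply/forallP => j; rewrite ltn_ord. Qed.

Lemma periph_from_succ x y (s : 'I_k) :
  val (x s) != 0 -> periph_from x s.+1 y -> periph_from x s y.
Proof.
move=> xs0 /forallP hy; apply/forallP => j; have := hy j; rewrite ltnS.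
by case: ltngtP => // /val_inj -> /eqP ->.
Qed.

Lemma periph_from_fill_one x s : periph_from x s (fill_from x s one).
Proof. by apply/forallP => j; rewrite ffunE; case: (j < s). Qed.

Lemma Hadj_fill_last x (s : 'I_k) c :
  s.+1 = k -> x s != c -> Hadj x (fill_from x s c).
Proof.
move=> sk xsc; apply/orP; left; apply/andP; split.
  apply: contra xsc => /eqP/ffunP/(_ s).
  by rewrite ffunE ltnn => ->.
apply/forallP => j; apply/implyP => jk.
have jlt : j < s by rewrite -ltnS sk.
by rewrite ffunE jlt.
Qed.

Lemma R2_fill_zero x y (s : 'I_k) :
  s.+2 <= k -> periph_from x s y -> R2 (fill_from x s zero) y.
Proof.
move=> s2k /forallP hy; apply/existsP; exists (widen_ord (leqnSn k) s).
rewrite s2k; apply/forallP => j; rewrite ffunE /=.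
by have := hy j; case: (j < s) => [/eqP ->|->].
Qed.

Definition reach_bounds (x : vert n k) (s : 'I_k) : Prop :=
  within (@Hadj n k) (k.-1 - s + (val (x s) != 0)) x (fill_from x s zero) /\
  exists2 y, periph_from x s y &
    within (@Hadj n k) (k.-1 - s + (val (x s) == 0)) x y.

Lemma reach_bounds_last x (s : 'I_k) : s.+1 = k -> reach_bounds x s.
Proof.
move=> sk; rewrite /reach_bounds.
have -> : k.-1 - s = 0 by rewrite -(congr1 predn sk) subnn.
case: eqP => [xs0 | /eqP xs0]; split.
- by rewrite -fill_zero_succ // sk fill_from_k /= eqxx.
- exists (fill_from x s one); first exact: periph_from_fill_one.
  by apply/within_edge/Hadj_fill_last; rewrite // -(inj_eq val_inj) xs0.
- by apply/within_edge/Hadj_fill_last; rewrite // -(inj_eq val_inj).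
- exists x; last by rewrite /= eqxx.
  by apply: periph_from_succ xs0 _; rewrite sk periph_from_k.
Qed.

Lemma reach_bounds_step x (s : 'I_k) (hs : s.+1 < k) :
  reach_bounds x (Ordinal hs) -> reach_bounds x s.
Proof.
set D := k.-1 - s.+1.
have dS : k.-1 - s = D.+1 by rewrite /D; lia.
have D_addb (b : bool) : D + b <= D.+1 by case: b; rewrite ?addn0 ?addn1.
have hadj y : periph_from x s y ->
    Hadj (fill_from x s zero) y /\ Hadj y (fill_from x s zero).
  by move=> hy; rewrite /Hadj R2_fill_zero ?orbT.
case=> [/= to_zero [y hy to_y]]; rewrite /reach_bounds dS.
case: eqP => [xs0 | /eqP xs0] /=; rewrite addn0 -addn1.
- rewrite fill_zero_succ // in to_zero.
  have {}to_zero := within_mono (D_addb _) to_zero.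
  split=> //; exists (fill_from x s one); first exact: periph_from_fill_one.
  apply: within_trans to_zero (within_edge _).
  by case: (hadj _ (periph_from_fill_one x s)).
- have hy' := periph_from_succ xs0 hy.
  have {}to_y := within_mono (D_addb _) to_y.
  split; last by exists y.
  by apply: within_trans to_y (within_edge _); case: (hadj _ hy').
Qed.

Lemma reach_bounds_all x (s : 'I_k) : reach_bounds x s.
Proof.
move: {2}(k - s) (erefl (k - s)) => d; elim: d s => [|d IH] s dk.
  by move: (ltn_ord s); rewrite -subn_gt0 dk.
case: (ltnP s.+1 k) => hs.
  by apply: (reach_bounds_step (IH _ _)); rewrite /= subnS dk.
by apply: reach_bounds_last; apply/eqP; rewrite eqn_leq hs ltn_ord.
Qed.

End SuffixTargets.

Theorem mainTheorem6 (n k : nat) (hn : 2 <= n) (hk : 1 <= k) (x : vert n k) :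
  dist_set (@Hadj n k) x (rootset n k) <= (if first_zero x then k - 1 else k)
  /\ dist_set (@Hadj n k) x (periph n k) <= (if first_zero x then k else k - 1).
Proof.
pose s0 : 'I_k := Ordinal hk.
have [to_root [y hy to_periph]] := reach_bounds_all hn x s0.
have first_zeroE : first_zero x = (val (x s0) == 0).
  apply/forallP/eqP => [/(_ s0)/implyP/(_ isT)/eqP // | xs0 j].
  apply/implyP => /eqP j0; have -> : j = s0 by apply: val_inj.
  by rewrite xs0.
have k_lt_card : k < #|vert n k|.
  rewrite card_ffun !card_ord; apply: leq_trans (ltn_expl k (isT : 1 < 2)) _.
  by rewrite leq_exp2r.
have k1_lt_card : k - 1 < #|vert n k|.
  exact: leq_ltn_trans (leq_subr 1 k) k_lt_card.
have boundE (b : bool) : k.-1 - s0 + b = (if b then k else k - 1).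
  by rewrite subn0; case: b; lia.
rewrite !boundE if_neg in to_root to_periph; rewrite first_zeroE; split.
- apply: (dist_set_leq _ _ to_root); last by case: ifP.
  by rewrite inE; apply/forallP => j; rewrite ffunE.
- apply: (dist_set_leq _ _ to_periph); last by case: ifP.
  by rewrite inE; apply/forallP => j; move/forallP: hy => /(_ j).
Qed.
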